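(* Let $G$ be an $n$-vertex digraph which is an orientation of a connected simple graph containing exactly one cycle, and suppose $G$ has no sources. Then $G$ has a quasi-kernel with at most $\frac{n+2}{3}$ vertices. Moreover, the bound is sharp: for every $n\ge 4$ with $n\equiv 1\pmod 3$, the cyclically oriented cycle on $n$ vertices has no quasi-kernel with fewer than $\frac{n+2}{3}$ vertices.
   Context: Digraphs are finite, without loops and without multiple edges in the same direction. A source is a vertex of in-degree $0$. For $V'\subseteq V(G)$, $\Gamma^+(V')$ is the set of out-neighbours of vertices of $V'$ and $\Gamma^+_2(V')=V'\cup\Gamma^+(V')\cup\Gamma^+(\Gamma^+(V'))$. A quasi-kernel is an independent set $Q$ with $\Gamma^+_2(Q)=V(G)$. *)

From mathcomp Require Import all_boot.
Set Implicit Arguments. Unset Strict Implicit. Unset Printing Implicit Defensive.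

Definition outN (T : finType) (e : rel T) (A : {set T}) : {set T} :=
  [set y | [exists x in A, e x y]].
Definition out2 (T : finType) (e : rel T) (A : {set T}) : {set T} :=
  A :|: outN e A :|: outN e (outN e A).

Definition independent (T : finType) (e : rel T) (Q : {set T}) : Prop :=
  forall x y, x \in Q -> y \in Q -> ~~ e x y.

Definition quasi_kernel (T : finType) (e : rel T) (Q : {set T}) : Prop :=
  independent e Q /\ out2 e Q = setT.

Definition no_sources (T : finType) (e : rel T) : Prop :=
  forall x, exists y, e y x.

Definition oriented (T : finType) (e : rel T) : Prop :=
  irreflexive e /\ forall x y, e x y -> ~~ e y x.

Definition adj (T : finType) (e : rel T) : rel T := fun x y => e x y || e y x.

Definition connected_und (T : finType) (e : rel T) : Prop :=
  forall x y, connect (adj e) x y.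

Definition is_cycle (T : finType) (e : rel T) (s : seq T) : Prop :=
  3 <= size s /\ ucycle (adj e) s.

Definition cycle_edge (T : finType) (s : seq T) : rel T :=
  fun x y => [&& x \in s, y \in s & (next s x == y) || (next s y == x)].

(* the underlying graph contains exactly one cycle (cycles being identified
   with their edge sets) *)
Definition exactly_one_cycle (T : finType) (e : rel T) : Prop :=
  exists s, is_cycle e s /\
    forall s', is_cycle e s' -> forall x y, cycle_edge s' x y = cycle_edge s x y.

Definition cyc_rel (n : nat) : rel 'I_n :=
  fun i j => val j == (val i).+1 %% n.
Arguments cyc_rel n : clear implicits.

From mathcomp Require Import all_boot zify.
Set Implicit Arguments. Unset Strict Implicit. Unset Printing Implicit Defensive.

(* Choose for every vertex z an in-neighbour [parent z].  The
   periodic orbits of [parent] are cycles of the underlying graph, so in a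
   unicyclic graph they all coincide with the unique cycle C, every vertex
   reaches a fixed vertex c0 of C, and every arc x -> y is a parent arc
   x = parent y (an extra arc would close a second cycle).  Hence it suffices
   to label vertices by ell : T -> Z/3 with ell z = 1 + [z \in S] + ell (parent z),
   where S is a set of at most two vertices, no vertex of S having its parent
   in S.  Each of the three sets "ell = r, or z \in S and ell = r + 1" is then
   a quasi-kernel, and together they count every vertex once, plus once more
   for S; so one of them has at most (n + 2) / 3 vertices.  The labelling is a
   weighted distance to c0, where S (at most c0 and its grandparent) corrects
   the total weight of C to a multiple of 3.

   Sharpness.  In the directed n-cycle every vertex has out-degree one, so
   any set Q satisfies #|out2 Q| <= 3 #|Q|; a quasi-kernel thus has
   3 #|Q| >= n, i.e. 3 #|Q| >= n + 2 when n = 1 mod 3. *)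

Section LabellingQuasiKernel.
Variables (T : finType) (e : rel T) (par : T -> T) (S : {set T}) (ell : T -> nat).
Hypothesis par_arc : forall x, e (par x) x.
Hypothesis arc_par : forall x y, e x y -> x = par y.
Hypothesis ell_step : forall z, ell z = ((z \in S).+1 + ell (par z)) %% 3.
Hypothesis S_separated : forall z, ~~ ((z \in S) && (par z \in S)).

Lemma ell_lt3 z : ell z < 3.
Proof. by rewrite ell_step ltn_pmod. Qed.

Definition candidate (r : nat) : {set T} :=
  [set z | (ell z == r) || (z \in S) && (ell z == (r + 1) %% 3)].

Lemma candidate_independent r : r < 3 -> independent e (candidate r).
Proof.
move=> lt_r3 x y; rewrite !inE => Cx Cy; apply/negP => /arc_par x_par.
move: Cx; rewrite {}x_par => Cpy.
have := ell_step y; have := S_separated y; have := ell_lt3 (par y).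
move: Cpy Cy; case: (y \in S); case: (par y \in S) => /=; lia.
Qed.

Lemma in_outN (A : {set T}) x y : x \in A -> e x y -> y \in outN e A.
Proof. by move=> xA xy; rewrite inE; apply/existsP; exists x; rewrite xA. Qed.

(* Every vertex is within two parent steps of each candidate. *)
Lemma candidate_absorbing r : r < 3 -> out2 e (candidate r) = setT.
Proof.
move=> lt_r3; apply/setP => z; rewrite in_setT.
have near_z : [|| z \in candidate r, par z \in candidate r
                | par (par z) \in candidate r].
  have := ell_step z; have := ell_step (par z); have := S_separated z.
  have := ell_lt3 z; have := ell_lt3 (par z); have := ell_lt3 (par (par z)).
  rewrite !inE; case: (z \in S); case: (par z \in S) => /=; lia.
rewrite /out2 !in_setU; case/or3P: near_z => [-> // | Cp | Cpp].
  by rewrite (in_outN Cp (par_arc z)) orbT.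
by rewrite (in_outN (in_outN Cpp (par_arc _)) (par_arc z)) orbT.
Qed.

(* A vertex lies in at most one candidate, or two if it belongs to S. *)
Lemma candidates_card :
  #|candidate 0| + #|candidate 1| + #|candidate 2| <= #|T| + #|S|.
Proof.
have card_sum (A : {set T}) : #|A| = \sum_z (z \in A).
  by rewrite -sum1_card big_mkcond /=; apply: eq_bigr => z _; case: (z \in A).
rewrite -cardsT !card_sum -!big_split /=; apply: leq_sum => z _.
rewrite !inE; have := ell_lt3 z; case: (z \in S) => /=; lia.
Qed.

Lemma labelling_quasi_kernel :
  exists Q : {set T}, quasi_kernel e Q /\ 3 * #|Q| <= #|T| + #|S|.
Proof.
have qk r : r < 3 -> quasi_kernel e (candidate r).
  by move=> lt_r3; split; [exact: candidate_independent | exact: candidate_absorbing].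
have := candidates_card.
case: (leqP (3 * #|candidate 0|) (#|T| + #|S|)) => [small0 _|big0].
  by exists (candidate 0); split => //; exact: qk.
case: (leqP (3 * #|candidate 1|) (#|T| + #|S|)) => [small1 _|big1].
  by exists (candidate 1); split => //; exact: qk.
case: (leqP (3 * #|candidate 2|) (#|T| + #|S|)) => [small2 _|big2].
  by exists (candidate 2); split => //; exact: qk.
lia.
Qed.

End LabellingQuasiKernel.

Section CycleThroughEdge.
Variables (T : finType) (e : rel T) (a b : T).

Definition adj_without : rel T :=
  [rel x y | adj e x y && ~~ ((x == a) && (y == b) || (x == b) && (y == a))].

Lemma adj_without_sym : symmetric adj_without.
Proof.
move=> x y; rewrite /adj_without /adj /= orbC; congr (_ && ~~ _).
by rewrite orbC; congr (_ || _); rewrite andbC.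
Qed.

Lemma cycle_through_edge : a != b -> adj e a b -> connect adj_without b a ->
  exists s, is_cycle e s /\ cycle_edge s a b.
Proof.
move=> neq_ab adj_ab /connectP[q q_path a_last].
case: (shortenP q_path) a_last => q' q'_path q'_uniq _ a_last.
exists (b :: q'); split; first split.
- case: q' q'_path q'_uniq a_last => [|c [|c' q'']] //=.
    by move=> _ _ eq_ab; rewrite eq_ab eqxx in neq_ab.
  by move=> + _ a_c; rewrite -a_c /= /adj_without /= !eqxx orbT !andbF.
- rewrite /ucycle q'_uniq andbT /= rcons_path -a_last andbC.
  by rewrite adj_ab /=; apply: sub_path q'_path => x y /andP[].
- have b_q' : b \notin q' by case/andP: q'_uniq.
  have prev_b : prev (b :: q') b = last b q'.
    rewrite prev_nth mem_head (memNindex b_q').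
    by rewrite -[size q']/((size (b :: q')).-1) nth_last.
  rewrite /cycle_edge mem_head a_last mem_last.
  by rewrite -prev_b (next_prev q'_uniq) eqxx.
Qed.

End CycleThroughEdge.

(* In a source-free orientation, a chosen in-neighbour [parent x] of every
   vertex turns the digraph into a functional graph traversed backwards. *)
Section ParentFunction.
Variables (T : finType) (e : rel T).
Hypotheses (e_oriented : oriented e) (e_no_sources : no_sources e).

Definition parent (x : T) : T := odflt x [pick y | e y x].

Lemma parentP x : e (parent x) x.
Proof.
rewrite /parent; case: pickP => [y //|no_in].
by have [y yx] := e_no_sources x; rewrite no_in in yx.
Qed.

Lemma arc_irrefl x : e x x = false.
Proof. by case: e_oriented. Qed.

Lemma arc_asym x y : e x y -> e y x -> False.
Proof. by case: e_oriented => _ asym /asym /negP. Qed.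

(* Orientations have neither loops nor digons, so parent chains do not
   return to their start within two steps. *)
Lemma parent_neq x : parent x != x.
Proof. by apply/eqP => px; have := parentP x; rewrite px arc_irrefl. Qed.

Lemma parent2_neq x : parent (parent x) != x.
Proof.
apply/eqP => ppx; have := parentP (parent x); rewrite ppx.
exact: arc_asym (parentP x).
Qed.

Definition periodic (x : T) : bool := fcycle parent (orbit parent x).

Lemma next_periodic x z : periodic x -> z \in orbit parent x ->
  next (orbit parent x) z = parent z.
Proof. by move=> x_per z_orb; have /eqP := next_cycle x_per z_orb. Qed.

Lemma periodic_is_cycle x : periodic x -> is_cycle e (orbit parent x).
Proof.
move=> x_per; split; last first.
  rewrite /ucycle orbit_uniq andbT; apply: sub_cycle x_per => y z /= /eqP <-.
  by rewrite /adj parentP orbT.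
have := (orbitPcycle 0 4).1 x_per; rewrite size_orbit.
have := order_gt0 parent x; case: (order parent x) => [|[|[|k]]] //= _ back.
  by have := parent_neq x; rewrite back eqxx.
by have := parent2_neq x; rewrite back eqxx.
Qed.

Lemma reach_periodic z : exists2 c, periodic c & fconnect parent z c.
Proof.
exists (iter (order parent z).-1 parent z); last exact: fconnect_iter.
rewrite /periodic -fconnect_f.
have /trajectP[i lt_i loop_i] := looping_order parent z.
rewrite -iterS orderSpred loop_i.
have -> : (order parent z).-1 = ((order parent z).-1 - i) + i.
  by have := order_gt0 parent z; lia.
by rewrite iterD fconnect_iter.
Qed.

Section UniqueCycle.
Hypothesis e_one_cycle : exactly_one_cycle e.

Lemma cycle_edges_eq s1 s2 : is_cycle e s1 -> is_cycle e s2 ->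
  cycle_edge s1 =2 cycle_edge s2.
Proof. by case: e_one_cycle => s [_ uniq_s] s1_cyc s2_cyc x y; rewrite !uniq_s. Qed.

Lemma periodic_orbit_mem x y : periodic x -> periodic y -> y \in orbit parent x.
Proof.
move=> x_per y_per.
have := cycle_edges_eq (periodic_is_cycle x_per) (periodic_is_cycle y_per) y (parent y).
rewrite /cycle_edge (next_periodic y_per (in_orbit _ _)) eqxx orTb andbT.
have py_orb : parent y \in orbit parent y by apply: mem_orbit; exact: in_orbit.
by rewrite py_orb in_orbit => /andP[].
Qed.

Variable c0 : T.
Hypothesis c0_periodic : periodic c0.

Lemma reaches_c0 z : fconnect parent z c0.
Proof.
have [c c_per z_c] := reach_periodic z; apply: connect_trans z_c _.
by rewrite fconnect_orbit; exact: periodic_orbit_mem.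
Qed.

(* Every arc is a parent arc: another arc a -> b, together with the parent
   chains from a and from b to c0, would close a cycle whose edge {a, b}
   is not an edge of the cycle through c0. *)
Lemma arc_parent a b : e a b -> a = parent b.
Proof.
move=> ab; apply/eqP/negPn/negP => a_not_pb.
have step z : adj_without e a b z (parent z).
  rewrite /adj_without /= /adj parentP orbT /=.
  apply/negP => /orP[/andP[/eqP-> /eqP pa_b]|/andP[/eqP-> /eqP pb_a]].
    by have := parentP a; rewrite pa_b; exact: arc_asym.
  by rewrite pb_a eqxx in a_not_pb.
have to_c0 z : connect (adj_without e a b) z c0.
  apply: connect_sub (reaches_c0 z) => x y /eqP <-; exact: connect1.
have [|||s [s_cycle s_ab]] := @cycle_through_edge T e a b.
- by apply/eqP => a_b; rewrite a_b arc_irrefl in ab.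
- by rewrite /adj ab.
- by apply: connect_trans (to_c0 b) _; rewrite (sym_connect_sym (adj_without_sym e a b)).
move: s_ab; rewrite (cycle_edges_eq s_cycle (periodic_is_cycle c0_periodic)).
case/and3P => a_C b_C /orP[] /eqP; rewrite next_periodic //.
  by move=> pa_b; have := parentP a; rewrite pa_b; exact: arc_asym.
by move=> pb_a; rewrite pb_a eqxx in a_not_pb.
Qed.

(* With k the
   length of the cycle, c0 gets weight 2 unless 3 | k, and its grandparent
   on the cycle gets weight 2 when k = 1 mod 3, so that the cycle has total
   weight divisible by 3. *)
Definition dist (z : T) : nat := findex parent z c0.

Lemma iter_dist z : iter (dist z) parent z = c0.
Proof. exact: iter_findex (reaches_c0 z). Qed.

Lemma dist_parent z : z != c0 -> dist z = (dist (parent z)).+1.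
Proof. by move=> z_c0; apply: fconnect_findex (reaches_c0 z) _; rewrite eq_sym. Qed.

Lemma dist_c0 : dist c0 = 0.
Proof. exact: findex0. Qed.

Lemma iter_inj_dist z i j : i < dist z -> j < dist z ->
  iter i parent z = iter j parent z -> i = j.
Proof.
have dist_lt := findex_max (reaches_c0 z).
move=> lt_i lt_j eq_ij; rewrite -(findex_iter (ltn_trans lt_i dist_lt)).
by rewrite -(findex_iter (ltn_trans lt_j dist_lt)) eq_ij.
Qed.

Lemma iter_before_dist z i : i < dist z -> iter i parent z != c0.
Proof.
move=> lt_i; apply/eqP => iter_c0.
have := findex_iter (ltn_trans lt_i (findex_max (reaches_c0 z))).
by rewrite iter_c0 -/(dist z) => dist_i; rewrite dist_i ltnn in lt_i.
Qed.

Definition cycle_len : nat := (dist (parent c0)).+1.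

(* The cycle has length at least 3 (no loops, no digons). *)
Lemma cycle_len_ge3 : 2 <= dist (parent c0).
Proof.
have := iter_dist (parent c0); case: (dist (parent c0)) => [|[|k]] //= back.
  by have := parent_neq c0; rewrite back eqxx.
by have := parent2_neq c0; rewrite back eqxx.
Qed.

Definition heavy : {set T} :=
  [set z | (z == c0) && (cycle_len %% 3 != 0)
         || (z == parent (parent c0)) && (cycle_len %% 3 == 1)].

Definition wdist (z : T) : nat :=
  \sum_(i < dist z) (iter i parent z \in heavy).+1.

Definition ell (z : T) : nat := wdist z %% 3.

Lemma wdist_parent z : z != c0 -> wdist z = (z \in heavy).+1 + wdist (parent z).
Proof.
move=> z_c0; rewrite /wdist dist_parent // big_ord_recl /=; congr (_ + _).
by apply: eq_bigr => i _; rewrite -iterS iterSr.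
Qed.

Lemma wdist_c0 : wdist c0 = 0.
Proof. by rewrite /wdist dist_c0 big_ord0. Qed.

(* Going once round the cycle from the parent of c0, only the grandparent
   of c0 can be heavy. *)
Lemma wdist_cycle : wdist (parent c0) = dist (parent c0) + (cycle_len %% 3 == 1).
Proof.
have ge2 := cycle_len_ge3; rewrite /wdist.
under eq_bigr => i _.
  rewrite inE (negbTE (iter_before_dist (ltn_ord i))) /=.
  have -> : (iter i parent (parent c0) == parent (parent c0)) = (i == 1 :> nat).
    by apply/eqP/eqP => [|-> //]; exact: iter_inj_dist (ltn_ord i) ge2.
  over.
move: ge2; case: (dist (parent c0)) => [|[|k]] // _.
under eq_bigr do rewrite -add1n.
rewrite big_split /= sum_nat_const card_ord muln1; congr (_ + _).
by rewrite !big_ord_recl /= big1_eq addn0.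
Qed.

Lemma ell_step z : ell z = ((z \in heavy).+1 + ell (parent z)) %% 3.
Proof.
rewrite /ell modnDmr; have [->|z_c0] := eqVneq z c0; last by rewrite wdist_parent.
have c0_not_gp : c0 != parent (parent c0).
  by rewrite eq_sym; apply: iter_before_dist (cycle_len_ge3).
rewrite wdist_c0 wdist_cycle inE eqxx (negbTE c0_not_gp) /= orbF /cycle_len.
lia.
Qed.

(* c0 and its grandparent are at distance two on a cycle of length >= 4,
   so no heavy vertex has a heavy parent. *)
Lemma heavy_separated z : ~~ ((z \in heavy) && (parent z \in heavy)).
Proof.
have ge2 := cycle_len_ge3.
have pc0_c0 : parent c0 != c0 := parent_neq c0.
have pc0_gp : parent c0 != parent (parent c0).
  by apply/eqP => /(@iter_inj_dist (parent c0) 0 1 (ltnW ge2) ge2).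
have gp_c0 : cycle_len %% 3 == 1 -> parent (parent (parent c0)) != c0.
  (* when k = 1 mod 3 the cycle has length at least 4 *)
  move=> len1; apply: (@iter_before_dist (parent c0) 2).
  by move: len1; rewrite /cycle_len; lia.
have gp_gp : parent (parent (parent c0)) != parent (parent c0) := parent_neq _.
rewrite !inE; apply/negP => /andP[/orP[] /andP[/eqP-> len]].
  by rewrite (negbTE pc0_c0) (negbTE pc0_gp).
by rewrite (negbTE (gp_c0 len)) (negbTE gp_gp).
Qed.

Lemma card_heavy : #|heavy| <= 2.
Proof.
apply: leq_trans (_ : #|[set c0; parent (parent c0)]| <= 2); last first.
  by rewrite cards2; case: (_ != _).
apply: subset_leq_card; apply/subsetP => z; rewrite !inE.
by case/orP => /andP[-> _]; rewrite ?orbT.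
Qed.

Lemma rooted_quasi_kernel :
  exists Q : {set T}, quasi_kernel e Q /\ 3 * #|Q| <= #|T| + 2.
Proof.
have [Q [Q_qk Q_small]] :=
  labelling_quasi_kernel parentP arc_parent ell_step heavy_separated.
by exists Q; split => //; apply: leq_trans Q_small _; rewrite leq_add2l card_heavy.
Qed.

End UniqueCycle.
End ParentFunction.

Section FunctionalDigraph.
Variables (T : finType) (e : rel T) (f : T -> T).
Hypothesis e_functional : forall x y, e x y -> y = f x.

Lemma card_outN (A : {set T}) : #|outN e A| <= #|A|.
Proof.
apply: leq_trans (leq_imset_card f A); apply: subset_leq_card.
apply/subsetP => y; rewrite inE => /existsP[x /andP[xA /e_functional ->]].
exact: imset_f.
Qed.

Lemma card_out2 (A : {set T}) : #|out2 e A| <= 3 * #|A|.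
Proof.
have outN2 := leq_trans (card_outN (outN e A)) (card_outN A).
apply: leq_trans (leq_card_setU _ _) _; rewrite mulSn mulSn mul1n addnA.
by apply: leq_add (leq_trans (leq_card_setU _ _) _) outN2; rewrite leq_add2l card_outN.
Qed.

End FunctionalDigraph.

Lemma cyc_rel_functional n (i j : 'I_n) : cyc_rel n i j -> j = ordS i.
Proof. by move/eqP => j_succ; apply: val_inj. Qed.

Lemma cycle_quasi_kernel_lower_bound n : n %% 3 = 1 ->
  forall Q : {set 'I_n}, quasi_kernel (cyc_rel n) Q -> n + 2 <= 3 * #|Q|.
Proof.
move=> n_mod3 Q [_ Q_abs].
have := card_out2 (@cyc_rel_functional n) Q.
rewrite Q_abs cardsT card_ord; move: #|Q| => q; lia.
Qed.

Theorem mainTheorem8 :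
  (forall (T : finType) (e : rel T),
      oriented e -> connected_und e -> exactly_one_cycle e -> no_sources e ->
      exists Q : {set T}, quasi_kernel e Q /\ 3 * #|Q| <= #|T| + 2)
  /\
  (forall n : nat, 4 <= n -> n %% 3 = 1 ->
      forall Q : {set 'I_n}, quasi_kernel (cyc_rel n) Q -> n + 2 <= 3 * #|Q|).
Proof.
split=> [T e e_oriented _ e_one_cycle e_no_sources | n _].
  have [[|x0 s] [[size_s _] _]] := e_one_cycle; first by [].
  have [c0 c0_periodic _] := reach_periodic e x0.
  exact: rooted_quasi_kernel c0_periodic.
exact: cycle_quasi_kernel_lower_bound.
Qed.
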